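(* Agent-knowledge logic is decidable: there is an algorithm which, given any agent-knowledge formula $\varphi$, decides whether $\varphi$ is valid with respect to the class of all agent-knowledge models.
   Context: Agent-knowledge logic: pairwise disjoint sets $\mathbf{Prop}_A,\mathbf{Prop}_K,\mathbf{Nom}_A,\mathbf{Nom}_K$; formulas $\varphi ::= p_A \mid p_K \mid a \mid k \mid \neg\varphi \mid \varphi\land\varphi \mid \Box_A\varphi \mid \Box_K\varphi \mid @_a\varphi \mid @_k\varphi$ ($p_A\in\mathbf{Prop}_A$, $p_K\in\mathbf{Prop}_K$, $a\in\mathbf{Nom}_A$, $k\in\mathbf{Nom}_K$). An AK model is $(W_A, W_K, (R_y)_{y \in W_K}, (S_x)_{x \in W_A}, V)$ with $W_A,W_K$ non-empty sets, each $R_y$ a binary relation on $W_A$, each $S_x$ a binary relation on $W_K$, and $V$ sending $\mathbf{Prop}_A\cup\mathbf{Nom}_A$ to subsets of $W_A$ and $\mathbf{Prop}_K\cup\mathbf{Nom}_K$ to subsets of $W_K$, with $V(a)=\{a^V\}$ and $V(k)=\{k^V\}$ singletons for nominals. Satisfaction at $(x,y)\in W_A\times W_K$: $p_A$ iff $x\in V(p_A)$; $p_K$ iff $y\in V(p_K)$; $a$ iff $x=a^V$; $k$ iff $y=k^V$; Boolean clauses as usual; $\Box_A\varphi$ iff $(x',y)\models\varphi$ for all $x'$ with $xR_yx'$; $\Box_K\varphi$ iff $(x,y')\models\varphi$ for all $y'$ with $yS_xy'$; $@_a\varphi$ iff $(a^V,y)\models\varphi$; $@_k\varphi$ iff $(x,k^V)\models\varphi$.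 A formula is valid if it is satisfied at every pair $(x,y)$ of every AK model. *)

From Stdlib Require Import List Arith.
Import ListNotations.

(* ---------- Syntax of agent-knowledge logic ----------
   Prop_A, Prop_K, Nom_A, Nom_K are taken to be four disjoint countably
   infinite sets, each indexed by nat (disjointness is by construction:
   they are different constructors). *)
Inductive form : Type :=
| PA   : nat -> form
| PK   : nat -> form
| NA   : nat -> form
| NK   : nat -> form
| Neg  : form -> form
| Conj : form -> form -> form
| BoxA : form -> form
| BoxK : form -> form
| AtA  : nat -> form -> form
| AtK  : nat -> form -> form.

(* A nominal's valuation is a singleton {a^V}; we store the point a^V. *)
Record AKModel : Type := {
  WA : Type;
  WK : Type;
  WA_ne : inhabited WA;
  WK_ne : inhabited WK;
  RA : WK -> WA -> WA -> Prop;
  SK : WA -> WK -> WK -> Prop;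
  VPA : nat -> WA -> Prop;
  VPK : nat -> WK -> Prop;
  VNA : nat -> WA;
  VNK : nat -> WK
}.

Fixpoint sat (M : AKModel) (x : WA M) (y : WK M) (phi : form) : Prop :=
  match phi with
  | PA p => VPA M p x
  | PK p => VPK M p y
  | NA a => x = VNA M a
  | NK k => y = VNK M k
  | Neg f => ~ sat M x y f
  | Conj f g => sat M x y f /\ sat M x y g
  | BoxA f => forall x', RA M y x x' -> sat M x' y f
  | BoxK f => forall y', SK M x y y' -> sat M x y' f
  | AtA a f => sat M (VNA M a) y f
  | AtK k f => sat M x (VNK M k) f
  end.

Definition valid (phi : form) : Prop :=
  forall (M : AKModel) (x : WA M) (y : WK M), sat M x y phi.

(* ---------- A model of computation: mu-recursive functions ----------
   Since classical axioms are admitted, "there is a Rocq function deciding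
   validity" would be trivial; decidability is therefore expressed by the
   existence of a (partial) mu-recursive program. *)
Inductive rf : Type :=
| Zero : rf
| Succ : rf
| Proj : nat -> rf
| Comp : rf -> list rf -> rf
| Prec : rf -> rf -> rf
| Mu   : rf -> rf.

Inductive eval : rf -> list nat -> nat -> Prop :=
| eZero v : eval Zero v 0
| eSucc x v : eval Succ (x :: v) (S x)
| eProj i v : i < length v -> eval (Proj i) v (nth i v 0)
| eComp f gs v ws y : evals gs v ws -> eval f ws y -> eval (Comp f gs) v y
| ePrec0 f g v y : eval f v y -> eval (Prec f g) (0 :: v) y
| ePrecS f g n v r y :
    eval (Prec f g) (n :: v) r -> eval g (n :: r :: v) y ->
    eval (Prec f g) (S n :: v) y
| eMu f v n :
    eval f (n :: v) 0 ->
    (forall m, m < n -> exists k, eval f (m :: v) (S k)) ->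
    eval (Mu f) v n
with evals : list rf -> list nat -> list nat -> Prop :=
| esNil v : evals [] v []
| esCons g gs v w ws : eval g v w -> evals gs v ws -> evals (g :: gs) v (w :: ws).

Definition npair (a b : nat) : nat := (a + b) * (a + b + 1) / 2 + b.

Fixpoint code (phi : form) : nat :=
  match phi with
  | PA p => npair 0 p
  | PK p => npair 1 p
  | NA a => npair 2 a
  | NK k => npair 3 k
  | Neg f => npair 4 (code f)
  | Conj f g => npair 5 (npair (code f) (code g))
  | BoxA f => npair 6 (code f)
  | BoxK f => npair 7 (code f)
  | AtA a f => npair 8 (npair a (code f))
  | AtK k f => npair 9 (npair k (code f))
  end.

Definition decidable_formulas (P : form -> Prop) : Prop :=
  exists prog : rf, forall phi : form,
    (P phi -> eval prog [code phi] 1) /\ (~ P phi -> eval prog [code phi] 0).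

From Stdlib Require Import String List Arith Lia Cantor Classical ClassicalEpsilon.
Import ListNotations.

(* Validity is reduced to a statement with only bounded quantifiers about the
   code [c] of the formula, which a primitive recursive program evaluates.

   A formula refuted somewhere is refuted in a model with at most
   [B = (c+2)^(3^c)] points of each sort (selective filtration): start from the
   evaluation point and the denotations of the nominals of code at most [c], and
   run [c] rounds adding, for every pair of points collected so far and every
   formula of code at most [c], a successor refuting the corresponding box.
   A model on [{0, ..., B-1}] is coded by six base-[B] numerals below explicit
   bounds, and so is a table of truth values for all formula codes up to [c]; a
   table obeying the Tarski clauses at every code exists and agrees with
   satisfaction. Hence a formula is valid iff every table consistent with every
   such model marks its code true at every point. *)

(** * Primitive recursive programs *)

Lemma eval_conv p v y y' : eval p v y -> y = y' -> eval p v y'.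
Proof. now intros H <-. Qed.

Lemma eval_Proj_nth i v y : i < length v -> nth i v 0 = y -> eval (Proj i) v y.
Proof. intros Hi <-. now constructor. Qed.

Create HintDb rf.

Ltac rf_step :=
  match goal with
  | |- eval (Proj _) _ _ => apply eval_Proj_nth; cbn; [lia | try reflexivity]
  | |- eval (Comp _ _) _ _ => eapply eComp
  | |- evals _ _ _ => constructor
  | |- eval Zero _ _ => constructor
  | |- eval Succ _ _ => constructor
  | |- eval _ _ _ => solve [eauto with rf]
  end.

Fixpoint projs (i n : nat) : list rf :=
  match n with 0 => [] | S n => Proj i :: projs (S i) n end.

Lemma evals_projs u v : evals (projs (length u) (length v)) (u ++ v) v.
Proof.
  revert u; induction v as [|x v IH]; intros u; cbn; constructor.
  - apply eval_Proj_nth; [rewrite length_app; cbn; lia | apply nth_middle].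
  - specialize (IH (u ++ [x])). rewrite length_app, Nat.add_1_r, <- app_assoc in IH.
    exact IH.
Qed.

Definition const_rf (k : nat) : rf := Nat.iter k (fun p => Comp Succ [p]) Zero.

Lemma const_rf_spec k v : eval (const_rf k) v k.
Proof. induction k; cbn; repeat rf_step; eauto. Qed.
#[local] Hint Resolve const_rf_spec : rf.

Definition add_rf : rf := Prec (Proj 0) (Comp Succ [Proj 1]).
Definition mul_rf : rf := Prec Zero (Comp add_rf [Proj 1; Proj 2]).
Definition pred_rf : rf := Prec Zero (Proj 0).
Definition monus_rf : rf := Prec (Proj 0) (Comp pred_rf [Proj 1]).
Definition pow_rf : rf := Prec (const_rf 1) (Comp mul_rf [Proj 1; Proj 2]).

Lemma add_rf_spec a b : eval add_rf [a; b] (a + b).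
Proof.
  induction a; [constructor; rf_step|].
  eapply ePrecS; [exact IHa|]. repeat rf_step.
Qed.
#[local] Hint Resolve add_rf_spec : rf.

Lemma mul_rf_spec a b : eval mul_rf [a; b] (a * b).
Proof.
  induction a; [repeat constructor|].
  eapply ePrecS; [exact IHa|]. repeat rf_step.
  replace (S a * b) with (a * b + b) by lia. apply add_rf_spec.
Qed.
#[local] Hint Resolve mul_rf_spec : rf.

Lemma pred_rf_spec a : eval pred_rf [a] (pred a).
Proof. induction a; [repeat constructor|]. eapply ePrecS; [exact IHa | rf_step]. Qed.
#[local] Hint Resolve pred_rf_spec : rf.

Lemma monus_rf_spec b a : eval monus_rf [b; a] (a - b).
Proof.
  induction b; [constructor; rf_step; lia|].
  eapply ePrecS; [exact IHb|]. repeat rf_step. replace (a - S b) with (pred (a - b)) by lia.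
  apply pred_rf_spec.
Qed.
#[local] Hint Resolve monus_rf_spec : rf.

Lemma pow_rf_spec e b : eval pow_rf [e; b] (b ^ e).
Proof.
  induction e; [constructor; apply const_rf_spec|].
  eapply ePrecS; [exact IHe|]. repeat rf_step.
  replace (b ^ S e) with (b ^ e * b) by (cbn; lia). apply mul_rf_spec.
Qed.
#[local] Hint Resolve pow_rf_spec : rf.

Definition truth (P : Prop) : nat := if excluded_middle_informative P then 1 else 0.

Lemma truth_true (P : Prop) : P -> truth P = 1.
Proof. unfold truth; destruct excluded_middle_informative; tauto. Qed.

Lemma truth_false (P : Prop) : ~ P -> truth P = 0.
Proof. unfold truth; destruct excluded_middle_informative; tauto. Qed.

Ltac truth_cases := unfold truth; repeat destruct excluded_middle_informative; (tauto || lia).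

Lemma truth_ext (P Q : Prop) : (P <-> Q) -> truth P = truth Q.
Proof. truth_cases. Qed.

Lemma truth_le1 (P : Prop) : truth P <= 1.
Proof. truth_cases. Qed.

Lemma truth_nonzero (P : Prop) : truth P <> 0 <-> P.
Proof. unfold truth; destruct excluded_middle_informative; split; (lia || tauto). Qed.

Definition eq_rf : rf :=
  Comp monus_rf [Comp add_rf [Comp monus_rf [Proj 1; Proj 0]; Comp monus_rf [Proj 0; Proj 1]];
                 const_rf 1].
Definition not_rf : rf := Comp monus_rf [Proj 0; const_rf 1].

Lemma eq_rf_spec a b : eval eq_rf [a; b] (truth (a = b)).
Proof.
  eapply eval_conv.
  - unfold eq_rf. repeat rf_step.
  - truth_cases.
Qed.
#[local] Hint Resolve eq_rf_spec : rf.

Lemma not_rf_spec (P : Prop) : eval not_rf [truth P] (truth (~ P)).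
Proof.
  eapply eval_conv.
  - unfold not_rf. repeat rf_step.
  - truth_cases.
Qed.
#[local] Hint Resolve not_rf_spec : rf.

Lemma div_succ n b : S n / b = n / b + truth (S (n / b) * b = S n).
Proof.
  destruct b as [|b']; [rewrite truth_false; cbn; lia|]. set (b := S b').
  pose proof (Nat.div_mod n b ltac:(lia)) as En. pose proof (Nat.mod_upper_bound n b ltac:(lia)).
  destruct (Nat.eq_dec (S (n mod b)) b) as [Hr|Hr].
  - rewrite truth_true by nia. symmetry. apply Nat.div_unique with 0; lia.
  - rewrite truth_false by nia. symmetry. apply Nat.div_unique with (S (n mod b)); lia.
Qed.

Definition div_rf : rf :=
  Prec Zero (Comp add_rf [Proj 1; Comp eq_rf [Comp mul_rf [Comp Succ [Proj 1]; Proj 2];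
                                              Comp Succ [Proj 0]]]).
Definition mod_rf : rf := Comp monus_rf [Comp mul_rf [Proj 1; div_rf]; Proj 0].

Lemma div_rf_spec a b : eval div_rf [a; b] (a / b).
Proof.
  induction a as [|a IH]; [rewrite Nat.Div0.div_0_l; repeat constructor|].
  eapply ePrecS; [exact IH|]. rewrite div_succ.
  repeat rf_step.
Qed.
#[local] Hint Resolve div_rf_spec : rf.

Lemma mod_rf_spec a b : eval mod_rf [a; b] (a mod b).
Proof.
  rewrite Nat.Div0.mod_eq.
  unfold mod_rf. repeat rf_step.
Qed.
#[local] Hint Resolve mod_rf_spec : rf.

(** * Bounded arithmetic *)

Inductive term : Type :=
| Var (x : string)
| Const (k : nat)
| Add (s t : term)
| Mul (s t : term)
| Pow (s t : term)
| Div (s t : term)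
| Mod (s t : term).

Inductive bform : Type :=
| BEq (s t : term)
| BNot (f : bform)
| BAnd (f g : bform)
| BImp (f g : bform)
| BIff (f g : bform)
| BAll (x : string) (bound : term) (f : bform).

Fixpoint lookup (env : list (string * nat)) (x : string) : nat :=
  match env with
  | [] => 0
  | (y, k) :: env => if String.eqb x y then k else lookup env x
  end.

Fixpoint term_value (t : term) (env : list (string * nat)) : nat :=
  match t with
  | Var x => lookup env x
  | Const k => k
  | Add s t => term_value s env + term_value t env
  | Mul s t => term_value s env * term_value t env
  | Pow s t => term_value s env ^ term_value t env
  | Div s t => term_value s env / term_value t env
  | Mod s t => term_value s env mod term_value t env
  end.

Fixpoint holds (f : bform) (env : list (string * nat)) : Prop :=
  match f with
  | BEq s t => term_value s env = term_value t env
  | BNot f => ~ holds f env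
  | BAnd f g => holds f env /\ holds g env
  | BImp f g => holds f env -> holds g env
  | BIff f g => holds f env <-> holds g env
  | BAll x e f => forall k, k < term_value e env -> holds f ((x, k) :: env)
  end.

Fixpoint var_rf (ctx : list string) (x : string) : rf :=
  match ctx with
  | [] => Zero
  | y :: ctx => if String.eqb x y then Proj 0 else Comp (var_rf ctx x) (projs 1 (length ctx))
  end.

Fixpoint term_rf (ctx : list string) (t : term) : rf :=
  match t with
  | Var x => var_rf ctx x
  | Const k => const_rf k
  | Add s t => Comp add_rf [term_rf ctx s; term_rf ctx t]
  | Mul s t => Comp mul_rf [term_rf ctx s; term_rf ctx t]
  | Pow s t => Comp pow_rf [term_rf ctx t; term_rf ctx s]
  | Div s t => Comp div_rf [term_rf ctx s; term_rf ctx t]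
  | Mod s t => Comp mod_rf [term_rf ctx s; term_rf ctx t]
  end.

Lemma var_rf_spec env x : eval (var_rf (map fst env) x) (map snd env) (lookup env x).
Proof.
  induction env as [|[y k] env IH]; cbn; [constructor|].
  destruct (String.eqb x y); [rf_step|].
  eapply eComp; [|exact IH].
  rewrite length_map, <- (length_map snd). apply (evals_projs [k]).
Qed.
#[local] Hint Resolve var_rf_spec : rf.

Lemma term_rf_spec t env : eval (term_rf (map fst env) t) (map snd env) (term_value t env).
Proof. induction t; cbn; repeat rf_step. Qed.
#[local] Hint Resolve term_rf_spec : rf.

Fixpoint sum_lt (n : nat) (g : nat -> nat) : nat :=
  match n with 0 => 0 | S n => sum_lt n g + g n end.

Definition sum_rf (n : nat) (bound body : rf) : rf :=
  Comp (Prec Zero (Comp add_rf [Proj 1; Comp body (Proj 0 :: projs 2 n)])) (bound :: projs 0 n).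

Lemma sum_rf_spec bound body v N (g : nat -> nat) :
  eval bound v N -> (forall k, eval body (k :: v) (g k)) ->
  eval (sum_rf (length v) bound body) v (sum_lt N g).
Proof.
  intros Hbound Hbody. eapply eComp; [constructor; [exact Hbound | apply (evals_projs [] v)]|].
  clear Hbound. induction N as [|N IH]; [repeat constructor|].
  eapply ePrecS; [exact IH|]. repeat rf_step. apply (evals_projs [N; _] v).
Qed.

Lemma truth_forall_lt N (P : nat -> Prop) :
  1 - sum_lt N (fun k => truth (~ P k)) = truth (forall k, k < N -> P k).
Proof.
  induction N as [|N IH]; cbn [sum_lt]; [rewrite truth_true; [lia | intros; lia]|].
  pose proof (truth_le1 (forall k, k < N -> P k)).
  destruct (classic (P N)) as [HN|HN].
  - rewrite (truth_false (~ P N)), Nat.add_0_r, IH by tauto. apply truth_ext. split.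
    + intros Hall k Hk. destruct (Nat.eq_dec k N) as [->|Hne]; [exact HN | apply Hall; lia].
    + intros Hall k Hk. apply Hall. lia.
  - rewrite (truth_true (~ P N)), (truth_false (forall k, k < S N -> P k)); auto with arith; lia.
Qed.

Lemma mul_rf_truth (P Q : Prop) : eval mul_rf [truth P; truth Q] (truth (P /\ Q)).
Proof. eapply eval_conv; [apply mul_rf_spec | truth_cases]. Qed.
#[local] Hint Resolve mul_rf_truth : rf.

Fixpoint bform_rf (ctx : list string) (f : bform) : rf :=
  match f with
  | BEq s t => Comp eq_rf [term_rf ctx s; term_rf ctx t]
  | BNot f => Comp not_rf [bform_rf ctx f]
  | BAnd f g => Comp mul_rf [bform_rf ctx f; bform_rf ctx g]
  | BImp f g => Comp not_rf [Comp mul_rf [bform_rf ctx f; Comp not_rf [bform_rf ctx g]]]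
  | BIff f g => Comp eq_rf [bform_rf ctx f; bform_rf ctx g]
  | BAll x e f =>
      Comp monus_rf [sum_rf (length ctx) (term_rf ctx e) (Comp not_rf [bform_rf (x :: ctx) f]);
                     const_rf 1]
  end.

Lemma bform_rf_spec f env : eval (bform_rf (map fst env) f) (map snd env) (truth (holds f env)).
Proof.
  revert env; induction f as [s t| f IH | f IHf g IHg | f IHf g IHg | f IHf g IHg | x e f IH];
    intros env; cbn.
  - repeat rf_step.
  - repeat rf_step.
  - repeat rf_step.
  - eapply eval_conv; [repeat rf_step | truth_cases].
  - eapply eval_conv; [repeat rf_step | truth_cases].
  - eapply eval_conv; [| apply truth_forall_lt].
    eapply eComp; [| apply monus_rf_spec]. repeat rf_step.
    rewrite length_map, <- (length_map snd env). apply sum_rf_spec; [apply term_rf_spec|].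
    intros k. repeat rf_step. apply (IH ((x, k) :: env)).
Qed.

Lemma decidable_formulas_of_bform (P : form -> Prop) (x : string) (f : bform) :
  (forall phi, holds f [(x, code phi)] <-> P phi) -> decidable_formulas P.
Proof.
  intros HP. exists (bform_rf [x] f). intros phi.
  pose proof (bform_rf_spec f [(x, code phi)]) as Hf.
  split; intros Hphi; eapply eval_conv; [exact Hf | apply truth_true, HP, Hphi
                                        | exact Hf | apply truth_false; rewrite HP; exact Hphi].
Qed.

Lemma npair_to_nat a b : npair a b = Cantor.to_nat (a, b).
Proof.
  rewrite Cantor.to_nat_spec2. unfold npair.
  replace ((b + a) * S (b + a)) with ((a + b) * (a + b + 1)) by ring. lia.
Qed.

Lemma of_nat_npair a b : Cantor.of_nat (npair a b) = (a, b).
Proof. rewrite npair_to_nat. apply Cantor.cancel_of_to. Qed.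

Lemma npair_of_nat d a b : Cantor.of_nat d = (a, b) -> npair a b = d.
Proof. intros E. rewrite npair_to_nat, <- E. apply Cantor.cancel_to_of. Qed.

Lemma npair_ge a b : a + b <= npair a b.
Proof. rewrite npair_to_nat. pose proof (Cantor.to_nat_non_decreasing a b). lia. Qed.

(* Tags 9 and above are all read as [@_k], so that every number decodes to a formula. *)
Definition decode_step (dec : nat -> form) (t r : nat) : form :=
  match t with
  | 0 => PA r
  | 1 => PK r
  | 2 => NA r
  | 3 => NK r
  | 4 => Neg (dec r)
  | 5 => let (f, g) := Cantor.of_nat r in Conj (dec f) (dec g)
  | 6 => BoxA (dec r)
  | 7 => BoxK (dec r)
  | 8 => let (a, g) := Cantor.of_nat r in AtA a (dec g)
  | _ => let (k, g) := Cantor.of_nat r in AtK k (dec g)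
  end.

Fixpoint decode_fuel (fuel d : nat) : form :=
  match fuel with
  | 0 => PA 0
  | S fuel => let (t, r) := Cantor.of_nat d in decode_step (decode_fuel fuel) t r
  end.

Definition decode (d : nat) : form := decode_fuel (S d) d.

Lemma decode_step_ext dec1 dec2 t r :
  (forall e, e < npair t r -> dec1 e = dec2 e) -> decode_step dec1 t r = decode_step dec2 t r.
Proof.
  intros Hext. pose proof (npair_ge t r).
  destruct t as [|[|[|[|t]]]]; cbn; [reflexivity ..|].
  destruct (Cantor.of_nat r) as [f g] eqn:E. apply npair_of_nat in E. pose proof (npair_ge f g).
  destruct t as [|[|[|[|[|t]]]]]; f_equal; apply Hext; lia.
Qed.

Lemma decode_fuel_stable n m d : d < n -> d < m -> decode_fuel n d = decode_fuel m d.
Proof.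
  revert m d; induction n as [|n IH]; intros [|m] d Hn Hm; try lia; cbn.
  destruct (Cantor.of_nat d) as [t r] eqn:E. apply npair_of_nat in E; subst d.
  apply decode_step_ext. intros e He. apply IH; lia.
Qed.

Lemma decode_npair t r : decode (npair t r) = decode_step decode t r.
Proof.
  unfold decode at 1; cbn [decode_fuel]. rewrite of_nat_npair.
  apply decode_step_ext. intros e He. apply decode_fuel_stable; lia.
Qed.

Lemma decode_code phi : decode (code phi) = phi.
Proof.
  induction phi; cbn [code]; rewrite decode_npair; cbn [decode_step];
    rewrite ?of_nat_npair; congruence.
Qed.

Definition digit (b n i : nat) : nat := n / b ^ i mod b.

Fixpoint undigits (b : nat) (f : nat -> nat) (len : nat) : nat :=
  match len with 0 => 0 | S len => f 0 + b * undigits b (fun i => f (S i)) len end.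

Lemma digit_lt b n i : 0 < b -> digit b n i < b.
Proof. intros Hb. apply Nat.mod_upper_bound. lia. Qed.

Lemma undigits_lt b f len : (forall i, i < len -> f i < b) -> undigits b f len < b ^ len.
Proof.
  revert f; induction len as [|len IH]; intros f Hf; cbn; [lia|].
  specialize (IH (fun i => f (S i)) ltac:(intros i Hi; apply Hf; lia)).
  specialize (Hf 0 ltac:(lia)). nia.
Qed.

Lemma digit_undigits b f len i :
  (forall j, j < len -> f j < b) -> i < len -> digit b (undigits b f len) i = f i.
Proof.
  unfold digit. revert f i; induction len as [|len IH]; intros f i Hf Hi; [lia|].
  assert (Hb : b <> 0) by (specialize (Hf 0); lia). cbn [undigits].
  destruct i as [|i].
  - rewrite Nat.pow_0_r, Nat.div_1_r, Nat.mul_comm, Nat.Div0.mod_add.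
    apply Nat.mod_small, Hf. lia.
  - rewrite Nat.pow_succ_r', <- Nat.Div0.div_div, Nat.mul_comm, Nat.div_add by exact Hb.
    rewrite (Nat.div_small (f 0) b) by (apply Hf; lia).
    apply (IH (fun j => f (S j))); [intros; apply Hf|]; lia.
Qed.

Lemma div_mod_mixed b i j : j < b -> (i * b + j) / b = i /\ (i * b + j) mod b = j.
Proof.
  intros Hj. split.
  - rewrite Nat.div_add_l, Nat.div_small by lia. lia.
  - rewrite Nat.add_comm, Nat.Div0.mod_add. apply Nat.mod_small. exact Hj.
Qed.

Definition entry2 (b A i j : nat) : nat := digit b A (i * b + j).
Definition entry3 (b A i j k : nat) : nat := digit b A ((i * b + j) * b + k).

Definition tabulate2 (b n : nat) (f : nat -> nat -> nat) : nat :=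
  undigits b (fun m => f (m / b) (m mod b)) (n * b).
Definition tabulate3 (b n : nat) (f : nat -> nat -> nat -> nat) : nat :=
  undigits b (fun m => f (m / b / b) (m / b mod b) (m mod b)) (n * b * b).

Section Tabulation.
Variables (b n : nat).

Lemma tabulate2_spec f :
  (forall i j, i < n -> j < b -> f i j < b) ->
  tabulate2 b n f < b ^ (n * b) /\
  forall i j, i < n -> j < b -> entry2 b (tabulate2 b n f) i j = f i j.
Proof.
  intros Hf. assert (Hm : forall m, m < n * b -> f (m / b) (m mod b) < b).
  { intros m Hm.
    apply Hf; [apply Nat.Div0.div_lt_upper_bound; lia | apply Nat.mod_upper_bound; lia]. }
  split; [apply undigits_lt, Hm|].
  intros i j Hi Hj. unfold entry2, tabulate2. rewrite digit_undigits by (auto; nia).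
  destruct (div_mod_mixed b i j Hj) as [-> ->]. reflexivity.
Qed.

Lemma tabulate3_spec f :
  (forall i j k, i < n -> j < b -> k < b -> f i j k < b) ->
  tabulate3 b n f < b ^ (n * b * b) /\
  forall i j k, i < n -> j < b -> k < b -> entry3 b (tabulate3 b n f) i j k = f i j k.
Proof.
  intros Hf. assert (Hm : forall m, m < n * b * b -> f (m / b / b) (m / b mod b) (m mod b) < b).
  { intros m Hm. assert (b <> 0) by (intros ->; lia).
    apply Hf; [| apply Nat.mod_upper_bound; lia ..].
    do 2 (apply Nat.Div0.div_lt_upper_bound); lia. }
  split; [apply undigits_lt, Hm|].
  intros i j k Hi Hj Hk. unfold entry3, tabulate3. rewrite digit_undigits by (auto; nia).
  destruct (div_mod_mixed b (i * b + j) k Hk) as [-> ->].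
  destruct (div_mod_mixed b i j Hj) as [-> ->]. reflexivity.
Qed.

Lemma tabulate2_truth (P : nat -> nat -> Prop) :
  1 < b ->
  tabulate2 b n (fun i j => truth (P i j)) < b ^ (n * b) /\
  forall i j, i < n -> j < b ->
    (entry2 b (tabulate2 b n (fun i j => truth (P i j))) i j <> 0 <-> P i j).
Proof.
  intros Hb. destruct (tabulate2_spec (fun i j => truth (P i j))) as [Hlt Hentry].
  { intros i j _ _. pose proof (truth_le1 (P i j)). lia. }
  split; [exact Hlt|]. intros i j Hi Hj. rewrite Hentry by assumption. apply truth_nonzero.
Qed.

Lemma tabulate3_truth (P : nat -> nat -> nat -> Prop) :
  1 < b ->
  tabulate3 b n (fun i j k => truth (P i j k)) < b ^ (n * b * b) /\
  forall i j k, i < n -> j < b -> k < b ->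
    (entry3 b (tabulate3 b n (fun i j k => truth (P i j k))) i j k <> 0 <-> P i j k).
Proof.
  intros Hb. destruct (tabulate3_spec (fun i j k => truth (P i j k))) as [Hlt Hentry].
  { intros i j k _ _ _. pose proof (truth_le1 (P i j k)). lia. }
  split; [exact Hlt|]. intros i j k Hi Hj Hk. rewrite Hentry by assumption. apply truth_nonzero.
Qed.

End Tabulation.

Definition array_model (B ra sk pa pk na nk : nat) : AKModel := {|
  WA := nat; WK := nat; WA_ne := inhabits 0; WK_ne := inhabits 0;
  RA y x x' := x' < B /\ entry3 B ra y x x' <> 0;
  SK x y y' := y' < B /\ entry3 B sk x y y' <> 0;
  VPA p x := entry2 B pa p x <> 0;
  VPK p y := entry2 B pk p y <> 0;
  VNA a := digit B na a;
  VNK k := digit B nk k |}.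

Definition cell (B T d x y : nat) : Prop := entry3 B T d x y <> 0.

Section TruthTable.
Variables B ra sk pa pk na nk : nat.
Let FM := array_model B ra sk pa pk na nk.

Definition table_rule (T d x y t r : nat) : Prop :=
  (t = 0 -> (cell B T d x y <-> entry2 B pa r x <> 0)) /\
  (t = 1 -> (cell B T d x y <-> entry2 B pk r y <> 0)) /\
  (t = 2 -> (cell B T d x y <-> x = digit B na r)) /\
  (t = 3 -> (cell B T d x y <-> y = digit B nk r)) /\
  (t = 4 -> (cell B T d x y <-> ~ cell B T r x y)) /\
  (t = 5 -> forall f, f < r + 1 -> forall g, g < r + 1 -> npair f g = r ->
             (cell B T d x y <-> cell B T f x y /\ cell B T g x y)) /\
  (t = 6 -> (cell B T d x y <->
             forall x', x' < B -> entry3 B ra y x x' <> 0 -> cell B T r x' y)) /\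
  (t = 7 -> (cell B T d x y <->
             forall y', y' < B -> entry3 B sk x y y' <> 0 -> cell B T r x y')) /\
  (t = 8 -> forall a, a < r + 1 -> forall g, g < r + 1 -> npair a g = r ->
             (cell B T d x y <-> cell B T g (digit B na a) y)) /\
  (t = 9 -> forall k, k < r + 1 -> forall g, g < r + 1 -> npair k g = r ->
             (cell B T d x y <-> cell B T g x (digit B nk k))).

Definition consistent_table (c T : nat) : Prop :=
  forall d, d < c + 1 -> forall x, x < B -> forall y, y < B ->
  forall t, t < d + 1 -> forall r, r < d + 1 -> npair t r = d -> table_rule T d x y t r.

Lemma consistent_table_rule c T t r x y :
  consistent_table c T -> npair t r <= c -> x < B -> y < B -> table_rule T (npair t r) x y t r.
Proof. intros HT Hc Hx Hy. pose proof (npair_ge t r). apply HT; lia. Qed.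

Lemma consistent_table_cell c T phi x y :
  consistent_table c T -> code phi <= c -> x < B -> y < B ->
  (cell B T (code phi) x y <-> sat FM x y phi).
Proof.
  intros HT. revert x y.
  induction phi as [p|p|a|k|psi IH|psi1 IH1 psi2 IH2|psi IH|psi IH|a psi IH|k psi IH];
    intros x y Hc Hx Hy; cbn [code] in Hc |- *;
    match goal with |- cell _ _ (npair ?t ?r) _ _ <-> _ =>
      destruct (consistent_table_rule c T t r x y HT Hc Hx Hy)
        as (R0 & R1 & R2 & R3 & R4 & R5 & R6 & R7 & R8 & R9);
      pose proof (npair_ge t r) end;
    cbn [sat FM array_model WA WK RA SK VPA VPK VNA VNK].
  - now apply R0.
  - now apply R1.
  - now apply R2.
  - now apply R3.
  - rewrite (R4 eq_refl), IH by lia. reflexivity.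
  - pose proof (npair_ge (code psi1) (code psi2)).
    rewrite (R5 eq_refl (code psi1) ltac:(lia) (code psi2) ltac:(lia) eq_refl), IH1, IH2 by lia.
    reflexivity.
  - rewrite (R6 eq_refl). split.
    + intros Hbox x' [Hx' HR]. apply IH; [lia | exact Hx' | exact Hy | apply Hbox; assumption].
    + intros Hbox x' Hx' HR. apply IH; [lia | exact Hx' | exact Hy | apply Hbox; split; assumption].
  - rewrite (R7 eq_refl). split.
    + intros Hbox y' [Hy' HR]. apply IH; [lia | exact Hx | exact Hy' | apply Hbox; assumption].
    + intros Hbox y' Hy' HR. apply IH; [lia | exact Hx | exact Hy' | apply Hbox; split; assumption].
  - pose proof (npair_ge a (code psi)).
    rewrite (R8 eq_refl a ltac:(lia) (code psi) ltac:(lia) eq_refl).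
    apply IH; [lia | apply digit_lt; lia | exact Hy].
  - pose proof (npair_ge k (code psi)).
    rewrite (R9 eq_refl k ltac:(lia) (code psi) ltac:(lia) eq_refl).
    apply IH; [lia | exact Hx | apply digit_lt; lia].
Qed.

Hypothesis HB : 1 < B.

Definition truth_table (c : nat) : nat :=
  tabulate3 B (c + 1) (fun d x y => truth (sat FM x y (decode d))).

Lemma truth_table_spec c :
  truth_table c < B ^ ((c + 1) * B * B) /\
  forall d x y, d < c + 1 -> x < B -> y < B ->
    (cell B (truth_table c) d x y <-> sat FM x y (decode d)).
Proof. exact (tabulate3_truth B (c + 1) (fun d x y => sat FM x y (decode d)) HB). Qed.

Lemma truth_table_consistent c : consistent_table c (truth_table c).
Proof.
  destruct (truth_table_spec c) as [_ Hcell].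
  intros d Hd x Hx y Hy t Ht r Hr <-. pose proof (npair_ge t r).
  pose proof (Hcell (npair t r) x y ltac:(lia) Hx Hy) as Hroot. rewrite decode_npair in Hroot.
  assert (Hdig : forall n i, digit B n i < B) by (intros; apply digit_lt; lia).
  refine (conj _ (conj _ (conj _ (conj _ (conj _ (conj _ (conj _ (conj _ (conj _ _)))))))));
    intros Et; subst t; cbn [decode_step] in Hroot.
  all: try (intros f _ g _ <-; pose proof (npair_ge f g); rewrite of_nat_npair in Hroot).
  all: rewrite Hroot; cbn [sat FM array_model WA WK RA SK VPA VPK VNA VNK].
  - reflexivity.
  - reflexivity.
  - reflexivity.
  - reflexivity.
  - now rewrite (Hcell r x y) by lia.
  - now rewrite (Hcell f x y), (Hcell g x y) by lia.
  - split; intros Hbox z.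
    + intros Hz HR. apply (Hcell r z y); [lia | exact Hz | exact Hy | apply Hbox; auto].
    + intros [Hz HR]. apply (Hcell r z y); [lia | exact Hz | exact Hy | apply Hbox; auto].
  - split; intros Hbox z.
    + intros Hz HR. apply (Hcell r x z); [lia | exact Hx | exact Hz | apply Hbox; auto].
    + intros [Hz HR]. apply (Hcell r x z); [lia | exact Hx | exact Hz | apply Hbox; auto].
  - now rewrite (Hcell g (digit B na f) y) by (lia || apply Hdig).
  - now rewrite (Hcell g x (digit B nk f)) by (lia || apply Hdig).
Qed.

Lemma table_cells_iff_sat phi :
  (forall T, T < B ^ ((code phi + 1) * B * B) -> consistent_table (code phi) T ->
   forall x, x < B -> forall y, y < B -> cell B T (code phi) x y) <->
  (forall x, x < B -> forall y, y < B -> sat FM x y phi).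
Proof.
  split.
  - intros Hcells x Hx y Hy. destruct (truth_table_spec (code phi)) as [Hlt _].
    apply (consistent_table_cell (code phi) (truth_table (code phi)));
      auto using truth_table_consistent.
  - intros Hsat T _ HT x Hx y Hy. apply (consistent_table_cell (code phi) T); auto.
Qed.

End TruthTable.

(** * Selective filtration *)

Section Enumeration.
Context {W : Type}.
Variables (w0 : W) (L : list W).

Definition enum_dom : list W := nodup (fun a b => excluded_middle_informative (a = b)) L.
Definition enum_point (j : nat) : W := nth j enum_dom w0.
Definition enum_index (w : W) : nat :=
  epsilon (inhabits 0) (fun j => j < length enum_dom /\ enum_point j = w).

Lemma enum_dom_length : length enum_dom <= length L.
Proof. apply NoDup_incl_length; [apply NoDup_nodup | intros w; apply nodup_In]. Qed.

Lemma enum_index_spec w :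
  In w L -> enum_index w < length enum_dom /\ enum_point (enum_index w) = w.
Proof.
  intros Hw. apply (epsilon_spec (inhabits 0) (fun j => j < length enum_dom /\ enum_point j = w)).
  apply In_nth with (d := w0), (nodup_In (fun a b => excluded_middle_informative (a = b))), Hw.
Qed.

Lemma enum_point_inj i j :
  i < length enum_dom -> j < length enum_dom -> enum_point i = enum_point j -> i = j.
Proof. apply NoDup_nth, NoDup_nodup. Qed.

End Enumeration.

Definition model_size (c : nat) : nat := (c + 2) ^ 3 ^ c.

Lemma model_size_ge c : c + 2 <= model_size c.
Proof.
  unfold model_size. rewrite <- (Nat.pow_1_r (c + 2)) at 1.
  apply Nat.pow_le_mono_r; [lia|]. pose proof (Nat.pow_nonzero 3 c). lia.
Qed.

Definition for_all_arrays (c : nat) (P : nat -> nat -> nat -> nat -> nat -> nat -> Prop) : Prop :=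
  let B := model_size c in
  forall ra, ra < B ^ (B * B * B) -> forall sk, sk < B ^ (B * B * B) ->
  forall pa, pa < B ^ ((c + 1) * B) -> forall pk, pk < B ^ ((c + 1) * B) ->
  forall na, na < B ^ (c + 1) -> forall nk, nk < B ^ (c + 1) ->
  P ra sk pa pk na nk.

Definition valid_in_array_models (phi : form) : Prop :=
  let B := model_size (code phi) in
  for_all_arrays (code phi) (fun ra sk pa pk na nk =>
    forall x, x < B -> forall y, y < B -> sat (array_model B ra sk pa pk na nk) x y phi).

(* When no successor refutes [chi], [epsilon] returns an arbitrary point, which is harmless. *)
Definition witness_A (M : AKModel) (y : WK M) (x : WA M) (chi : form) : WA M :=
  epsilon (WA_ne M) (fun w => RA M y x w /\ ~ sat M w y chi).
Definition witness_K (M : AKModel) (x : WA M) (y : WK M) (chi : form) : WK M :=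
  epsilon (WK_ne M) (fun w => SK M x y w /\ ~ sat M x w chi).

Lemma witness_A_spec (M : AKModel) y x chi :
  (exists w, RA M y x w /\ ~ sat M w y chi) ->
  RA M y x (witness_A M y x chi) /\ ~ sat M (witness_A M y x chi) y chi.
Proof. apply (epsilon_spec (WA_ne M) (fun w => RA M y x w /\ ~ sat M w y chi)). Qed.

Lemma witness_K_spec (M : AKModel) x y chi :
  (exists w, SK M x y w /\ ~ sat M x w chi) ->
  SK M x y (witness_K M x y chi) /\ ~ sat M x (witness_K M x y chi) chi.
Proof. apply (epsilon_spec (WK_ne M) (fun w => SK M x y w /\ ~ sat M x w chi)). Qed.

Section Selection.
Variables (M : AKModel) (phi : form) (x0 : WA M) (y0 : WK M).
Local Notation c := (code phi).
Local Notation B := (model_size (code phi)).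

Definition candidates : list form := map decode (seq 0 (c + 1)).

Definition next_A (X : list (WA M)) (Y : list (WK M)) : list (WA M) :=
  X ++ map (fun '(x, y, chi) => witness_A M y x chi) (list_prod (list_prod X Y) candidates).
Definition next_K (X : list (WA M)) (Y : list (WK M)) : list (WK M) :=
  Y ++ map (fun '(x, y, chi) => witness_K M x y chi) (list_prod (list_prod X Y) candidates).

Fixpoint layers (i : nat) : list (WA M) * list (WK M) :=
  match i with
  | 0 => (x0 :: map (VNA M) (seq 0 (c + 1)), y0 :: map (VNK M) (seq 0 (c + 1)))
  | S i => let p := layers i in (next_A (fst p) (snd p), next_K (fst p) (snd p))
  end.

Definition layer_A (i : nat) : list (WA M) := fst (layers i).
Definition layer_K (i : nat) : list (WK M) := snd (layers i).

Lemma layer_incl i j : i <= j -> incl (layer_A i) (layer_A j) /\ incl (layer_K i) (layer_K j).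
Proof.
  induction 1 as [|j _ [IHA IHK]]; [split; apply incl_refl|].
  split; intros w Hw; apply in_or_app; left; auto.
Qed.

Lemma layer_length i :
  length (layer_A i) <= (c + 2) ^ 3 ^ i /\ length (layer_K i) <= (c + 2) ^ 3 ^ i.
Proof.
  induction i as [|i [IHA IHK]].
  - cbn. rewrite !length_map, !length_seq. lia.
  - assert (Hn : c + 2 <= (c + 2) ^ 3 ^ i).
    { rewrite <- (Nat.pow_1_r (c + 2)) at 1. apply Nat.pow_le_mono_r; [lia|].
      pose proof (Nat.pow_nonzero 3 i). lia. }
    replace ((c + 2) ^ 3 ^ S i) with ((c + 2) ^ 3 ^ i * (c + 2) ^ 3 ^ i * (c + 2) ^ 3 ^ i)
      by (rewrite Nat.pow_succ_r', (Nat.mul_comm 3), Nat.pow_mul_r; cbn; ring).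
    unfold layer_A, layer_K; cbn [layers fst snd]; fold (layer_A i) (layer_K i).
    unfold next_A, next_K. rewrite !length_app, !length_map, !length_prod.
    unfold candidates. rewrite length_map, length_seq.
    set (n := (c + 2) ^ 3 ^ i) in *.
    assert (Hprod : length (layer_A i) * length (layer_K i) * (c + 1) <= n * n * (c + 1))
      by (apply Nat.mul_le_mono_r, Nat.mul_le_mono; assumption).
    assert (n + n * n * (c + 1) <= n * n * n) by nia. split; lia.
Qed.

Lemma witness_A_in i x y chi :
  In x (layer_A i) -> In y (layer_K i) -> code chi <= c -> In (witness_A M y x chi) (layer_A (S i)).
Proof.
  intros Hx Hy Hchi. apply in_or_app; right. apply in_map_iff. exists (x, y, chi).
  split; [reflexivity|]. apply in_prod; [apply in_prod; assumption|].
  apply in_map_iff. exists (code chi). split; [apply decode_code | apply in_seq; lia].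
Qed.

Lemma witness_K_in i x y chi :
  In x (layer_A i) -> In y (layer_K i) -> code chi <= c -> In (witness_K M x y chi) (layer_K (S i)).
Proof.
  intros Hx Hy Hchi. apply in_or_app; right. apply in_map_iff. exists (x, y, chi).
  split; [reflexivity|]. apply in_prod; [apply in_prod; assumption|].
  apply in_map_iff. exists (code chi). split; [apply decode_code | apply in_seq; lia].
Qed.

Definition dom_A : list (WA M) := enum_dom (layer_A c).
Definition dom_K : list (WK M) := enum_dom (layer_K c).
Definition point_A : nat -> WA M := enum_point x0 (layer_A c).
Definition point_K : nat -> WK M := enum_point y0 (layer_K c).
Definition index_A : WA M -> nat := enum_index x0 (layer_A c).
Definition index_K : WK M -> nat := enum_index y0 (layer_K c).

Lemma dom_length : length dom_A <= B /\ length dom_K <= B.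
Proof.
  destruct (layer_length c) as [HA HK].
  split; eapply Nat.le_trans; [apply enum_dom_length | exact HA | apply enum_dom_length | exact HK].
Qed.

(* An edge of the selection leads from a pair in layer [i] into layer [i+1]; this is what
   keeps the induction on [code psi + i] in [selection_sat] within the layers. *)
Definition layered_A (x y x' : nat) : Prop :=
  forall i, i < c -> In (point_A x) (layer_A i) -> In (point_K y) (layer_K i) ->
  In (point_A x') (layer_A (S i)).
Definition layered_K (x y y' : nat) : Prop :=
  forall i, i < c -> In (point_A x) (layer_A i) -> In (point_K y) (layer_K i) ->
  In (point_K y') (layer_K (S i)).

Definition selection : AKModel :=
  array_model B
    (tabulate3 B B (fun y x x' => truth (x' < length dom_A /\
                       RA M (point_K y) (point_A x) (point_A x') /\ layered_A x y x')))
    (tabulate3 B B (fun x y y' => truth (y' < length dom_K /\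
                       SK M (point_A x) (point_K y) (point_K y') /\ layered_K x y y')))
    (tabulate2 B (c + 1) (fun p x => truth (VPA M p (point_A x))))
    (tabulate2 B (c + 1) (fun p y => truth (VPK M p (point_K y))))
    (undigits B (fun a => index_A (VNA M a)) (c + 1))
    (undigits B (fun k => index_K (VNK M k)) (c + 1)).

Lemma size_gt_1 : 1 < B.
Proof. pose proof (model_size_ge c). lia. Qed.

Lemma nominal_in_layer_A a : a < c + 1 -> In (VNA M a) (layer_A 0).
Proof. intros Ha. right. apply in_map, in_seq. lia. Qed.

Lemma nominal_in_layer_K k : k < c + 1 -> In (VNK M k) (layer_K 0).
Proof. intros Hk. right. apply in_map, in_seq. lia. Qed.

Lemma index_A_spec w : In w (layer_A c) -> index_A w < length dom_A /\ point_A (index_A w) = w.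
Proof. apply enum_index_spec. Qed.

Lemma index_K_spec w : In w (layer_K c) -> index_K w < length dom_K /\ point_K (index_K w) = w.
Proof. apply enum_index_spec. Qed.

Lemma point_A_inj i j : i < length dom_A -> j < length dom_A -> point_A i = point_A j -> i = j.
Proof. apply enum_point_inj. Qed.

Lemma point_K_inj i j : i < length dom_K -> j < length dom_K -> point_K i = point_K j -> i = j.
Proof. apply enum_point_inj. Qed.

Lemma selection_RA y x x' : y < B -> x < B ->
  (RA selection y x x' <->
   x' < length dom_A /\ RA M (point_K y) (point_A x) (point_A x') /\ layered_A x y x').
Proof.
  intros Hy Hx. cbn [selection array_model RA].
  assert (Hbound : x' < length dom_A -> x' < B) by (pose proof dom_length; lia).
  split.
  - intros [Hx' Hrel]. apply (proj2 (tabulate3_truth B B _ size_gt_1)) in Hrel; assumption.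
  - intros Hrel. split; [apply Hbound, Hrel|].
    apply (proj2 (tabulate3_truth B B _ size_gt_1));
      [exact Hy | exact Hx | apply Hbound, Hrel | exact Hrel].
Qed.

Lemma selection_SK x y y' : x < B -> y < B ->
  (SK selection x y y' <->
   y' < length dom_K /\ SK M (point_A x) (point_K y) (point_K y') /\ layered_K x y y').
Proof.
  intros Hx Hy. cbn [selection array_model SK].
  assert (Hbound : y' < length dom_K -> y' < B) by (pose proof dom_length; lia).
  split.
  - intros [Hy' Hrel]. apply (proj2 (tabulate3_truth B B _ size_gt_1)) in Hrel; assumption.
  - intros Hrel. split; [apply Hbound, Hrel|].
    apply (proj2 (tabulate3_truth B B _ size_gt_1));
      [exact Hx | exact Hy | apply Hbound, Hrel | exact Hrel].
Qed.

Lemma selection_VPA p x : p < c + 1 -> x < B -> (VPA selection p x <-> VPA M p (point_A x)).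
Proof. intros Hp Hx. exact (proj2 (tabulate2_truth B (c + 1) _ size_gt_1) p x Hp Hx). Qed.

Lemma selection_VPK p y : p < c + 1 -> y < B -> (VPK selection p y <-> VPK M p (point_K y)).
Proof. intros Hp Hy. exact (proj2 (tabulate2_truth B (c + 1) _ size_gt_1) p y Hp Hy). Qed.

Lemma nominal_index_A_lt a : a < c + 1 -> index_A (VNA M a) < B.
Proof.
  intros Ha. destruct (index_A_spec (VNA M a)) as [Hlt _].
  - apply (layer_incl 0 c); [lia | apply nominal_in_layer_A, Ha].
  - pose proof dom_length. lia.
Qed.

Lemma selection_VNA a : a < c + 1 -> VNA selection a = index_A (VNA M a).
Proof. apply digit_undigits, nominal_index_A_lt. Qed.

Lemma nominal_index_K_lt k : k < c + 1 -> index_K (VNK M k) < B.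
Proof.
  intros Hk. destruct (index_K_spec (VNK M k)) as [Hlt _].
  - apply (layer_incl 0 c); [lia | apply nominal_in_layer_K, Hk].
  - pose proof dom_length. lia.
Qed.

Lemma selection_VNK k : k < c + 1 -> VNK selection k = index_K (VNK M k).
Proof. apply digit_undigits, nominal_index_K_lt. Qed.

Lemma selection_RA_witness i x y psi :
  i < c -> code psi <= c -> x < length dom_A -> y < length dom_K ->
  In (point_A x) (layer_A i) -> In (point_K y) (layer_K i) ->
  ~ (forall w, RA M (point_K y) (point_A x) w -> sat M w (point_K y) psi) ->
  exists x', x' < length dom_A /\ RA selection y x x' /\ In (point_A x') (layer_A (S i)) /\
             ~ sat M (point_A x') (point_K y) psi.
Proof.
  intros Hi Hpsi Hx Hy HxL HyL Hnot. pose proof dom_length.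
  destruct (witness_A_spec M (point_K y) (point_A x) psi) as [HR Hns].
  { apply not_all_ex_not in Hnot as [w Hw]. exists w. apply imply_to_and, Hw. }
  set (w := witness_A M (point_K y) (point_A x) psi) in *.
  assert (HwL : forall i', In (point_A x) (layer_A i') -> In (point_K y) (layer_K i') ->
                           In w (layer_A (S i'))) by (intros; apply witness_A_in; assumption).
  destruct (index_A_spec w) as [Hidx Hpt]; [apply (layer_incl (S i) c); [lia | auto]|].
  exists (index_A w). rewrite Hpt. refine (conj Hidx (conj _ (conj (HwL i HxL HyL) Hns))).
  apply selection_RA; [lia | lia |]. rewrite Hpt.
  refine (conj Hidx (conj HR _)). intros i' _ HxL' HyL'. rewrite Hpt. auto.
Qed.

Lemma selection_SK_witness i x y psi :
  i < c -> code psi <= c -> x < length dom_A -> y < length dom_K ->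
  In (point_A x) (layer_A i) -> In (point_K y) (layer_K i) ->
  ~ (forall w, SK M (point_A x) (point_K y) w -> sat M (point_A x) w psi) ->
  exists y', y' < length dom_K /\ SK selection x y y' /\ In (point_K y') (layer_K (S i)) /\
             ~ sat M (point_A x) (point_K y') psi.
Proof.
  intros Hi Hpsi Hx Hy HxL HyL Hnot. pose proof dom_length.
  destruct (witness_K_spec M (point_A x) (point_K y) psi) as [HR Hns].
  { apply not_all_ex_not in Hnot as [w Hw]. exists w. apply imply_to_and, Hw. }
  set (w := witness_K M (point_A x) (point_K y) psi) in *.
  assert (HwL : forall i', In (point_A x) (layer_A i') -> In (point_K y) (layer_K i') ->
                           In w (layer_K (S i'))) by (intros; apply witness_K_in; assumption).
  destruct (index_K_spec w) as [Hidx Hpt]; [apply (layer_incl (S i) c); [lia | auto]|].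
  exists (index_K w). rewrite Hpt. refine (conj Hidx (conj _ (conj (HwL i HxL HyL) Hns))).
  apply selection_SK; [lia | lia |]. rewrite Hpt.
  refine (conj Hidx (conj HR _)). intros i' _ HxL' HyL'. rewrite Hpt. auto.
Qed.

Lemma selection_sat psi : forall i x y,
  code psi + i <= c -> x < length dom_A -> y < length dom_K ->
  In (point_A x) (layer_A i) -> In (point_K y) (layer_K i) ->
  (sat selection x y psi <-> sat M (point_A x) (point_K y) psi).
Proof.
  destruct dom_length as [HA HK].
  induction psi as [p|p|a|k|psi IH|psi1 IH1 psi2 IH2|psi IH|psi IH|a psi IH|k psi IH];
    intros i x y Hc Hx Hy HxL HyL; cbn [code] in Hc;
    match goal with _ : context [npair ?t ?r] |- _ => pose proof (npair_ge t r) end; cbn [sat].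
  - apply selection_VPA; lia.
  - apply selection_VPK; lia.
  - rewrite selection_VNA by lia.
    destruct (index_A_spec (VNA M a)) as [Hidx Hpt];
      [apply (layer_incl 0 c); [lia | apply nominal_in_layer_A; lia]|].
    split; [intros ->; exact Hpt|].
    intros E. apply point_A_inj; [exact Hx | exact Hidx | congruence].
  - rewrite selection_VNK by lia.
    destruct (index_K_spec (VNK M k)) as [Hidx Hpt];
      [apply (layer_incl 0 c); [lia | apply nominal_in_layer_K; lia]|].
    split; [intros ->; exact Hpt|].
    intros E. apply point_K_inj; [exact Hy | exact Hidx | congruence].
  - rewrite (IH i) by (auto; lia). reflexivity.
  - pose proof (npair_ge (code psi1) (code psi2)).
    rewrite (IH1 i), (IH2 i) by (auto; lia). reflexivity.
  - assert (IH' : forall x', x' < length dom_A -> In (point_A x') (layer_A (S i)) ->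
                  (sat selection x' y psi <-> sat M (point_A x') (point_K y) psi)).
    { intros x' Hx' HxL'. apply (IH (S i)); auto; [lia | apply (layer_incl i (S i)); auto]. }
    split.
    + intros Hbox. apply NNPP. intros Hnot.
      destruct (selection_RA_witness i x y psi) as (x' & Hx' & HR & HxL' & Hns); auto; try lia.
      apply Hns, (IH' x' Hx' HxL'), Hbox, HR.
    + intros Hbox x' HR. apply selection_RA in HR as (Hx' & HRM & Hlay); [|lia|lia].
      apply IH'; [exact Hx' | apply Hlay; auto; lia | apply Hbox, HRM].
  - assert (IH' : forall y', y' < length dom_K -> In (point_K y') (layer_K (S i)) ->
                  (sat selection x y' psi <-> sat M (point_A x) (point_K y') psi)).
    { intros y' Hy' HyL'. apply (IH (S i)); auto; [lia | apply (layer_incl i (S i)); auto]. }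
    split.
    + intros Hbox. apply NNPP. intros Hnot.
      destruct (selection_SK_witness i x y psi) as (y' & Hy' & HR & HyL' & Hns); auto; try lia.
      apply Hns, (IH' y' Hy' HyL'), Hbox, HR.
    + intros Hbox y' HR. apply selection_SK in HR as (Hy' & HRM & Hlay); [|lia|lia].
      apply IH'; [exact Hy' | apply Hlay; auto; lia | apply Hbox, HRM].
  - pose proof (npair_ge a (code psi)). rewrite selection_VNA by lia.
    assert (Hnom : In (VNA M a) (layer_A i))
      by (apply (layer_incl 0 i); [lia | apply nominal_in_layer_A; lia]).
    destruct (index_A_spec (VNA M a)) as [Hidx Hpt]; [apply (layer_incl i c); [lia | exact Hnom]|].
    rewrite <- Hpt at 2.
    apply (IH i); [lia | exact Hidx | exact Hy | rewrite Hpt; exact Hnom | exact HyL].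
  - pose proof (npair_ge k (code psi)). rewrite selection_VNK by lia.
    assert (Hnom : In (VNK M k) (layer_K i))
      by (apply (layer_incl 0 i); [lia | apply nominal_in_layer_K; lia]).
    destruct (index_K_spec (VNK M k)) as [Hidx Hpt]; [apply (layer_incl i c); [lia | exact Hnom]|].
    rewrite <- Hpt at 2.
    apply (IH i); [lia | exact Hx | exact Hidx | exact HxL | rewrite Hpt; exact Hnom].
Qed.

Lemma sat_of_valid_in_array_models : valid_in_array_models phi -> sat M x0 y0 phi.
Proof.
  intros Hvalid. pose proof dom_length as [HA HK].
  assert (Hx0 : In x0 (layer_A 0)) by now left.
  assert (Hy0 : In y0 (layer_K 0)) by now left.
  destruct (index_A_spec x0) as [HxA HxP]; [apply (layer_incl 0 c); [lia | exact Hx0]|].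
  destruct (index_K_spec y0) as [HyK HyP]; [apply (layer_incl 0 c); [lia | exact Hy0]|].
  rewrite <- HxP, <- HyP. apply (selection_sat phi 0); try rewrite ?HxP, ?HyP; auto; try lia.
  apply Hvalid; try lia.
  - apply (proj1 (tabulate3_truth B B _ size_gt_1)).
  - apply (proj1 (tabulate3_truth B B _ size_gt_1)).
  - apply (proj1 (tabulate2_truth B (c + 1) _ size_gt_1)).
  - apply (proj1 (tabulate2_truth B (c + 1) _ size_gt_1)).
  - apply undigits_lt, nominal_index_A_lt.
  - apply undigits_lt, nominal_index_K_lt.
Qed.

End Selection.

Lemma valid_in_array_models_iff phi : valid_in_array_models phi <-> valid phi.
Proof.
  split; [intros Hvalid M x y; apply sat_of_valid_in_array_models, Hvalid|].
  intros Hvalid ra _ sk _ pa _ pk _ na _ nk _ x _ y _. apply Hvalid.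
Qed.

(** * Arithmetization of validity *)

Definition finite_check (c : nat) : Prop :=
  let B := model_size c in
  for_all_arrays c (fun ra sk pa pk na nk =>
    forall T, T < B ^ ((c + 1) * B * B) -> consistent_table B ra sk pa pk na nk c T ->
    forall x, x < B -> forall y, y < B -> cell B T c x y).

Lemma for_all_arrays_iff c (P Q : nat -> nat -> nat -> nat -> nat -> nat -> Prop) :
  (forall ra sk pa pk na nk, P ra sk pa pk na nk <-> Q ra sk pa pk na nk) ->
  for_all_arrays c P <-> for_all_arrays c Q.
Proof. intros HPQ. split; intros H ra ? sk ? pa ? pk ? na ? nk ?; apply HPQ; auto. Qed.

Lemma finite_check_iff phi : finite_check (code phi) <-> valid_in_array_models phi.
Proof.
  apply for_all_arrays_iff. intros. apply table_cells_iff_sat.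
  pose proof (model_size_ge (code phi)). lia.
Qed.

Section Arithmetization.
Local Open Scope string_scope.

Definition digit_t (b n i : term) : term := Mod (Div n (Pow b i)) b.
Definition entry2_t (b A i j : term) : term := digit_t b A (Add (Mul i b) j).
Definition entry3_t (b A i j k : term) : term := digit_t b A (Add (Mul (Add (Mul i b) j) b) k).
Definition npair_t (a b : term) : term :=
  Add (Div (Mul (Add a b) (Add (Add a b) (Const 1))) (Const 2)) b.
Definition nonzero (t : term) : bform := BNot (BEq t (Const 0)).

Definition size_t : term := Pow (Add (Var "c") (Const 2)) (Pow (Const 3) (Var "c")).
Definition cell_t (d x y : term) : bform := nonzero (entry3_t size_t (Var "T") d x y).

Definition case_t (k : nat) (f : bform) : bform := BImp (BEq (Var "t") (Const k)) f.
Definition cell_dxy : bform := cell_t (Var "d") (Var "x") (Var "y").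
Definition unpair_t (u v : string) (f : bform) : bform :=
  BAll u (Add (Var "r") (Const 1)) (BAll v (Add (Var "r") (Const 1))
    (BImp (BEq (npair_t (Var u) (Var v)) (Var "r")) f)).

Fixpoint conj_t (fs : list bform) : bform :=
  match fs with
  | [] => BEq (Const 0) (Const 0)
  | [f] => f
  | f :: fs => BAnd f (conj_t fs)
  end.

Definition table_rule_t : bform := conj_t [
  case_t 0 (BIff cell_dxy (nonzero (entry2_t size_t (Var "pa") (Var "r") (Var "x"))));
  case_t 1 (BIff cell_dxy (nonzero (entry2_t size_t (Var "pk") (Var "r") (Var "y"))));
  case_t 2 (BIff cell_dxy (BEq (Var "x") (digit_t size_t (Var "na") (Var "r"))));
  case_t 3 (BIff cell_dxy (BEq (Var "y") (digit_t size_t (Var "nk") (Var "r"))));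
  case_t 4 (BIff cell_dxy (BNot (cell_t (Var "r") (Var "x") (Var "y"))));
  case_t 5 (unpair_t "f" "g" (BIff cell_dxy
    (BAnd (cell_t (Var "f") (Var "x") (Var "y")) (cell_t (Var "g") (Var "x") (Var "y")))));
  case_t 6 (BIff cell_dxy (BAll "x'" size_t
    (BImp (nonzero (entry3_t size_t (Var "ra") (Var "y") (Var "x") (Var "x'")))
          (cell_t (Var "r") (Var "x'") (Var "y")))));
  case_t 7 (BIff cell_dxy (BAll "y'" size_t
    (BImp (nonzero (entry3_t size_t (Var "sk") (Var "x") (Var "y") (Var "y'")))
          (cell_t (Var "r") (Var "x") (Var "y'")))));
  case_t 8 (unpair_t "a" "g" (BIff cell_dxy
    (cell_t (Var "g") (digit_t size_t (Var "na") (Var "a")) (Var "y"))));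
  case_t 9 (unpair_t "k" "g" (BIff cell_dxy
    (cell_t (Var "g") (Var "x") (digit_t size_t (Var "nk") (Var "k")))))].

Definition consistent_table_t : bform :=
  BAll "d" (Add (Var "c") (Const 1)) (BAll "x" size_t (BAll "y" size_t
    (BAll "t" (Add (Var "d") (Const 1)) (BAll "r" (Add (Var "d") (Const 1))
      (BImp (BEq (npair_t (Var "t") (Var "r")) (Var "d")) table_rule_t))))).

Definition finite_check_t : bform :=
  let cube := Mul (Mul size_t size_t) size_t in
  let row := Mul (Add (Var "c") (Const 1)) size_t in
  let codes := Add (Var "c") (Const 1) in
  BAll "ra" (Pow size_t cube) (BAll "sk" (Pow size_t cube)
  (BAll "pa" (Pow size_t row) (BAll "pk" (Pow size_t row)
  (BAll "na" (Pow size_t codes) (BAll "nk" (Pow size_t codes)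
  (BAll "T" (Pow size_t (Mul row size_t))
    (BImp consistent_table_t
      (BAll "x" size_t (BAll "y" size_t (cell_t (Var "c") (Var "x") (Var "y"))))))))))).

Lemma holds_finite_check_t c : holds finite_check_t [("c", c)] <-> finite_check c.
Proof. reflexivity. Qed.

End Arithmetization.

Theorem mainTheorem8 : decidable_formulas valid.
Proof.
  apply (decidable_formulas_of_bform valid "c" finite_check_t). intros phi.
  rewrite holds_finite_check_t, finite_check_iff. apply valid_in_array_models_iff.
Qed.
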